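(* Let $n\ge1$ and let $t_1,\dots,t_{n+1}$ be real nodes with $t_i\ne t_j$ for $i\ne j$. Let $L=(l_{i,j})_{1\le i,j\le n+1}$ be the collocation matrix of the Newton basis at these nodes, i.e. $l_{i,j}=\prod_{k=1}^{j-1}(t_i-t_k)$ (so $L$ is lower triangular). Then $$L=F_nF_{n-1}\cdots F_1D,$$ where $D=\mathrm{diag}(d_{1,1},\dots,d_{n+1,n+1})$ with $d_{i,i}=\prod_{k=1}^{i-1}(t_i-t_k)$, and for $i=1,\dots,n$, $F_i\in\mathbb R^{(n+1)\times(n+1)}$ is the lower bidiagonal matrix with ones on the diagonal, whose subdiagonal entries are $(F_i)_{r,r-1}=m_{r,r-i}$ for $r=i+1,\dots,n+1$ and $(F_i)_{r,r-1}=0$ for $r\le i$, all other entries being zero, where $$m_{i,j}=\prod_{k=1}^{j-1}\frac{t_i-t_{i-k}}{t_{i-1}-t_{i-k-1}},\qquad 1\le j<i\le n+1$$ (an empty product equals $1$).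
   Context: The Newton basis associated with nodes $t_1,\dots,t_{n+1}$ is $w_0(t)=1$, $w_i(t)=\prod_{k=1}^{i}(t-t_k)$, $i=1,\dots,n$; its collocation matrix at the nodes is $L=(w_{j-1}(t_i))_{1\le i,j\le n+1}$. *)

(* Nodes are a function t : nat -> R, used at 1-based indices 1..n+1
   as in the paper; matrix indices i : 'I_n.+1 correspond to paper index i+1. *)
From HB Require Import structures.
From mathcomp Require Import all_boot all_order all_algebra.
Set Implicit Arguments. Unset Strict Implicit. Unset Printing Implicit Defensive.
Import Order.TTheory GRing.Theory Num.Theory.
Local Open Scope ring_scope.

Section NewtonDefs.
Variables (R : realFieldType) (n : nat) (t : nat -> R).

Definition newtonL : 'M[R]_n.+1 :=
  \matrix_(i, j) \prod_(1 <= k < j.+1) (t i.+1 - t k).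

Definition newtonD : 'M[R]_n.+1 :=
  diag_mx (\row_i \prod_(1 <= k < i.+1) (t i.+1 - t k)).

Definition newton_m (i j : nat) : R :=
  \prod_(1 <= k < j) ((t i - t (i - k)%N) / (t i.-1 - t (i - k - 1)%N)).

(* With 0-based row r the paper row
   is r+1, and the condition r+1 >= p+1 is p <= r. *)
Definition newtonF (p : nat) : 'M[R]_n.+1 :=
  \matrix_(r, c)
    if r == c then 1
    else if (r == c.+1 :> nat) && (p <= r)%N then newton_m r.+1 (r.+1 - p)
    else 0.

End NewtonDefs.

(* Write L = U D, where U = L D^-1 has entries w_j(t_i) / w_j(t_j), and let t'
   be the shifted nodes t_2, t_3, ...  Bordering a matrix by a leading 1 turns
   F_p(t') into F_(p+1)(t), so by induction on n it suffices to show
   U(t) = diag(1, U(t')) F_1(t), i.e. u_(i,j) = u'_(i-1,j-1) + u'_(i-1,j) m_(j+1,j).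
   Splitting the factors x - t_1 and x - t_j off the Newton polynomials reduces
   this identity, at x = t_i, to x - t_1 = (t_j - t_1) + (x - t_j). *)

From HB Require Import structures.
From mathcomp Require Import all_boot all_order all_algebra.
From mathcomp Require Import zify ring.
Set Implicit Arguments. Unset Strict Implicit. Unset Printing Implicit Defensive.
Import Order.TTheory GRing.Theory Num.Theory.
Local Open Scope ring_scope.

Lemma sum_mul_delta (R : pzSemiRingType) N (f : nat -> R) a :
  \sum_(k < N) f k * (k == a :> nat)%:R = if (a < N)%N then f a else 0.
Proof.
under eq_bigr => k _ do rewrite mulr_natr mulrb.
by rewrite -big_mkcond big_ord1_eq.
Qed.

Section Lift0Mx.
Variables (R : pzSemiRingType) (n : nat).
Implicit Types A B : 'M[R]_n.

Lemma lift0_mx00 A : lift0_mx A ord0 ord0 = 1.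
Proof. by rewrite !mxE split1 unlift_none /= mxE split1 unlift_none /= mxE. Qed.

Lemma lift0_mx0l A j : lift0_mx A ord0 (lift ord0 j) = 0.
Proof. by rewrite !mxE split1 unlift_none /= mxE split1 liftK /= mxE. Qed.

Lemma lift0_mxl0 A i : lift0_mx A (lift ord0 i) ord0 = 0.
Proof. by rewrite !mxE split1 liftK /= mxE split1 unlift_none /= mxE. Qed.

Lemma lift0_mxll A i j : lift0_mx A (lift ord0 i) (lift ord0 j) = A i j.
Proof. by rewrite !mxE split1 liftK /= mxE split1 liftK. Qed.

Lemma lift0_mx1 : lift0_mx (1%:M : 'M[R]_n) = 1%:M.
Proof. by rewrite /lift0_mx -scalar_mx_block. Qed.

Lemma lift0_mxM A B : lift0_mx (A *m B) = lift0_mx A *m lift0_mx B.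
Proof. by rewrite /lift0_mx mulmx_block !(mulmx0, mul0mx, mulmx1, addr0, add0r). Qed.

Definition lift0_fun (f : nat -> nat -> R) (i j : nat) : R :=
  if i is i'.+1 then (if j is j'.+1 then f i' j' else 0) else (j == 0)%:R.

Lemma lift0_mx_matrixE (f : nat -> nat -> R) (i j : 'I_n.+1) :
  lift0_mx (\matrix_(i', j' < n) f i' j') i j = lift0_fun f i j.
Proof.
case: (unliftP ord0 i) => [i'|] ->; case: (unliftP ord0 j) => [j'|] ->;
  by rewrite ?lift0_mx00 ?lift0_mx0l ?lift0_mxl0 ?lift0_mxll ?mxE ?lift0.
Qed.

End Lift0Mx.

Section NewtonFactorization.
Variable R : realFieldType.
Implicit Types (t : nat -> R) (x : R).

Definition distinct_nodes (N : nat) t : Prop :=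
  forall i j, (1 <= i <= N)%N -> (1 <= j <= N)%N -> i != j -> t i != t j.

Lemma distinct_nodes_shift N t :
  distinct_nodes N.+1 t -> distinct_nodes N (t \o succn).
Proof. by move=> ht i j ? ? ?; apply: ht; lia. Qed.

Definition newton_basis t (j : nat) x : R := \prod_(1 <= k < j.+1) (x - t k).

Lemma newton_basis0 t x : newton_basis t 0 x = 1.
Proof. exact: big_geq. Qed.

Lemma newton_basisSl t j x :
  newton_basis t j.+1 x = (x - t 1%N) * newton_basis (t \o succn) j x.
Proof. by rewrite /newton_basis big_nat_recl // big_add1. Qed.

Lemma newton_basisSr t j x :
  newton_basis t j.+1 x = newton_basis t j x * (x - t j.+1).
Proof. by rewrite /newton_basis big_nat_recr. Qed.

Lemma newton_basis_root t j k :
  (1 <= k <= j)%N -> newton_basis t j (t k) = 0.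
Proof.
move=> Hk; apply/eqP; rewrite prodf_seq_eq0; apply/hasP; exists k => /=.
  by rewrite mem_index_iota; lia.
by rewrite subrr.
Qed.

Lemma newton_basis_neq0 N t j :
  distinct_nodes N t -> (j < N)%N -> newton_basis t j (t j.+1) != 0.
Proof.
move=> ht jN; rewrite prodf_seq_neq0; apply/allP => k.
by rewrite mem_index_iota subr_eq0 => Hk; apply: ht; lia.
Qed.

Lemma newton_m_basis t j :
  newton_m t j.+2 j.+1 = newton_basis (t \o succn) j (t j.+2) / newton_basis t j (t j.+1).
Proof.
rewrite /newton_m prodf_div; congr (_ / _); rewrite big_nat_rev /=;
  apply: eq_big_nat => k Hk; congr (_ - t _); lia.
Qed.

Lemma newton_m_shift t i j :
  (j <= i)%N -> newton_m t i.+1 j = newton_m (t \o succn) i j.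
Proof.
move=> ji; apply: eq_big_nat => k Hk /=.
by congr ((_ - t _) / (t _ - t _)); lia.
Qed.

Definition newton_ratio t (i j : nat) : R :=
  newton_basis t j (t i.+1) / newton_basis t j (t j.+1).

Definition newtonU n t : 'M[R]_n.+1 := \matrix_(i, j) newton_ratio t i j.

Lemma newtonL_factor n t :
  distinct_nodes n.+1 t -> newtonL n t = newtonU n t *m newtonD n t.
Proof.
move=> ht; rewrite mul_mx_diag; apply/matrixP => i j; rewrite !mxE divfK //.
exact: (newton_basis_neq0 ht (ltn_ord j)).
Qed.

Lemma newton_ratio0 t i : newton_ratio t i 0 = 1.
Proof. by rewrite /newton_ratio !newton_basis0 divr1. Qed.

Lemma newton_ratio_lt t i j : (i < j)%N -> newton_ratio t i j = 0.
Proof. by move=> ij; rewrite /newton_ratio newton_basis_root ?mul0r //; lia. Qed.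

Lemma newton_ratio_diag N t i :
  distinct_nodes N t -> (i < N)%N -> newton_ratio t i i = 1.
Proof. by move=> ht iN; rewrite /newton_ratio divff // (newton_basis_neq0 ht). Qed.

Lemma newton_ratioSS N t i j : distinct_nodes N.+1 t -> (j.+2 <= N)%N ->
  newton_ratio t i.+1 j.+1 = newton_ratio (t \o succn) i j
    + newton_ratio (t \o succn) i j.+1 * newton_m t j.+3 j.+2.
Proof.
move=> ht jN; have ht' := distinct_nodes_shift ht.
have yt1 : t j.+2 - t 1%N != 0 by rewrite subr_eq0; apply: ht; lia.
have w'y : newton_basis (t \o succn) j (t j.+2) != 0.
  by apply: (newton_basis_neq0 ht'); lia.
have w'z : newton_basis (t \o succn) j.+1 (t j.+3) != 0.
  by apply: (newton_basis_neq0 ht'); lia.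
rewrite /newton_ratio newton_m_basis !(newton_basisSl t) (newton_basisSr (t \o succn) j) /=.
by field; rewrite yt1 w'y w'z.
Qed.

Lemma newton_ratio_lift0 N t i j : distinct_nodes N.+1 t -> (i <= N)%N ->
  newton_ratio t i j = lift0_fun (newton_ratio (t \o succn)) i j
    + lift0_fun (newton_ratio (t \o succn)) i j.+1 * newton_m t j.+2 j.+1.
Proof.
move=> ht; case: i => [|i] /= iN; case: j => [|j] /=.
- by rewrite newton_ratio0 mul0r addr0.
- by rewrite newton_ratio_lt // mul0r addr0.
- by rewrite !newton_ratio0 add0r mul1r [newton_m _ _ _]big_geq.
have ht' := distinct_nodes_shift ht.
case: (ltngtP j i) => [ji|ij|->].
- by apply: (newton_ratioSS _ ht); lia.
- by rewrite !newton_ratio_lt ?mul0r ?addr0 //; lia.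
- by rewrite (newton_ratio_diag ht) // (newton_ratio_diag ht') // newton_ratio_lt
    // mul0r addr0.
Qed.

Lemma lift0_fun_ratio_lt t i j :
  (i < j)%N -> lift0_fun (newton_ratio t) i j = 0.
Proof. by case: i => [|i]; case: j => [|j] //= ij; rewrite newton_ratio_lt. Qed.

Lemma newtonF1E n t (k j : 'I_n.+1) :
  newtonF n t 1 k j =
    (k == j :> nat)%:R + (k == j.+1 :> nat)%:R * newton_m t j.+2 j.+1.
Proof.
rewrite mxE -val_eqE /=; case: (eqVneq (k : nat) j) => [->|_].
  by rewrite ltn_eqF // mul0r addr0.
by rewrite add0r; case: eqP => [->|_]; rewrite ?mul1r ?subn1 ?mul0r.
Qed.

Lemma newtonU_lift0 n t : distinct_nodes n.+2 t ->
  newtonU n.+1 t = lift0_mx (newtonU n (t \o succn)) *m newtonF n.+1 t 1.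
Proof.
move=> ht; apply/matrixP => i j; rewrite !mxE.
under eq_bigr => k _ do rewrite lift0_mx_matrixE newtonF1E mulrDr mulrA.
rewrite big_split /= -mulr_suml !sum_mul_delta ltn_ord.
rewrite (newton_ratio_lift0 _ ht); last by rewrite -ltnS.
case: ifP => // /negbT; rewrite -leqNgt => jn.
by rewrite (@lift0_fun_ratio_lt _ i j.+1) //; have := ltn_ord i; lia.
Qed.

Lemma newtonF_shift n t p : (0 < p)%N ->
  newtonF n.+1 t p.+1 = lift0_mx (newtonF n (t \o succn) p).
Proof.
move=> p_gt0; apply/matrixP => i j.
case: (unliftP ord0 i) => [i'|] ->; case: (unliftP ord0 j) => [j'|] ->;
  rewrite ?lift0_mx00 ?lift0_mx0l ?lift0_mxl0 ?lift0_mxll !mxE ?lift0 //.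
- rewrite (inj_eq lift_inj) eqSS ltnS subSS.
  by case: ifP => // _; case: ifP => // /andP[_ pi]; rewrite newton_m_shift //; lia.
- rewrite eq_sym (negbTE (neq_lift _ _)).
  by case: ifP => //= /andP[/eqP [i'0] pi']; lia.
Qed.

Lemma prod_newtonF n t : distinct_nodes n.+1 t ->
  \prod_(p <- rev (iota 1 n)) newtonF n t p = newtonU n t.
Proof.
elim: n t => [|n IH] t ht.
  by rewrite big_nil; apply/matrixP => i j; rewrite !ord1 !mxE newton_ratio0.
have -> : rev (iota 1 n.+1) = rcons [seq p.+1 | p <- rev (iota 1 n)] 1%N.
  by rewrite /= rev_cons map_rev -(iotaDl 1 1).
have lift0_mx_morph : {morph @lift0_mx R n.+1 : A B / A * B >-> (A * B : 'M_n.+2)}.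
  by move=> A B; rewrite -!mulmxE lift0_mxM.
rewrite big_rcons big_map.
rewrite (eq_big_seq (fun p => lift0_mx (newtonF n (t \o succn) p))); last first.
  by move=> p; rewrite mem_rev mem_iota => p_ge1; apply: newtonF_shift; lia.
rewrite -(big_morph _ lift0_mx_morph (lift0_mx1 _ _)) IH.
  by rewrite (newtonU_lift0 ht) mulmxE.
exact: distinct_nodes_shift.
Qed.

End NewtonFactorization.

Theorem theorem2 (R : realFieldType) (n : nat) (t : nat -> R)
  (hn : (1 <= n)%N)
  (ht : forall i j : nat, (1 <= i <= n.+1)%N -> (1 <= j <= n.+1)%N ->
          i != j -> t i != t j) :
  newtonL n t =
  (\prod_(p <- rev (iota 1 n)) newtonF n t p) *m newtonD n t.
Proof.
by rewrite prod_newtonF // newtonL_factor.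
Qed.
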